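(* Let $G$ be a finite nonabelian simple group, let $G\le S_n$ be a faithful permutation representation of minimum degree, and let $k\ge1$, $\Omega=\overline G^k\subseteq\{0,1\}^{kn^2}$. Let $Q=\{(g_1,\dots,g_{2k})\in G^{2k}:g_1=g_{2k}=1\}$, acting on the variables by $M_{i,a,b}\mapsto M_{i,g_{2i-1}(a),g_{2i}(b)}$ (so $M_i\mapsto\overline{g_{2i-1}}M_i\overline{g_{2i}}^{-1}$). Suppose $H=\mathrm{Stab}_Q(\chi|_\Omega)$ for some coordinate function $\chi(x)=M_{i,a,b}$. Then $\mu(H,K)\le1$ for every $K$ with $H\le K\le Q$ and $K\in\mathcal N_{Q,\Omega}$.
   Context: $\overline G$ is the set of permutation matrices of elements of $G$. For $f$ on $\Omega$, $\mathrm{Stab}_Q(f)=\{\pi\in Q:f(\pi x)=f(x)\ \forall x\in\Omega\}$, and $\mathcal N_{Q,\Omega}$ is the set of $\mathrm{Stab}_Q(f)$ for $f:\Omega\to\mathbb N$. For $H\le Q\le G^{2k}$ and $S\subseteq[2k]$, $H{\upharpoonright}_S=\{(h_j)_{j\in S}: h\in H,\ h_j=1\ \forall j\notin S\}\le G^S$. $\mathrm{Diag}(G^{\{2i,2i+1\}})=\{(g,g)\}$. Let $E(H)=\{\{i,i+1\}: i\in[k-1],\ H{\upharpoonright}_{\{2i,2i+1\}}=\mathrm{Diag}(G^{\{2i,2i+1\}})\}$. For $H\le K\le Q$ with $K\in\mathcal N_{Q,\Omega}$, $\mu(H,K)$ is the number of vertices of a largest connected component of the graph $([k],E(H)\cap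 E(K))$, except that $\mu(H,Q)=0$. *)

From HB Require Import structures.
From mathcomp Require Import all_boot all_fingroup all_solvable.
From mathcomp Require Import zify.

Unset Printing Implicit Defensive.

Local Open Scope group_scope.

(* Coordinates of G^{2k} are indexed by 'I_(2*k), 0-indexed:
   paper's g_j (1 <= j <= 2k) is coordinate j-1. Blocks M_i (paper i in [k])
   are indexed by i : 'I_k (paper i-1). *)

Lemma oL_proof {k} (i : 'I_k) : 2 * i < 2 * k.
Proof. have := ltn_ord i; lia. Qed.
Lemma oR_proof {k} (i : 'I_k) : 2 * i + 1 < 2 * k.
Proof. have := ltn_ord i; lia. Qed.

Definition oL {k} (i : 'I_k) : 'I_(2 * k) := Ordinal (oL_proof i).
Definition oR {k} (i : 'I_k) : 'I_(2 * k) := Ordinal (oR_proof i).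

Definition tup (n k : nat) := {ffun 'I_(2 * k) -> {perm 'I_n}}.
(* points of {0,1}^{k n^2}: x (i,a,b) = value of the variable M_{i,a,b} *)
Definition pt (n k : nat) := {ffun 'I_k * 'I_n * 'I_n -> bool}.

(* Omega = \overline G ^ k : k-tuples of permutation matrices of elements of G,
   with \overline g _{a,b} = 1 iff g a = b. *)
Definition Omega {n} (G : {group {perm 'I_n}}) (k : nat) : {set pt n k} :=
  [set x : pt n k | [forall i : 'I_k, [exists g in G,
      [forall a : 'I_n, [forall b : 'I_n, x (i, a, b) == (g a == b)]]]]].

Definition QQ {n} (G : {group {perm 'I_n}}) (k : nat) : {set tup n k} :=
  [set h : tup n k | [forall j, h j \in G] &&
     [forall j : 'I_(2 * k), ((val j == 0) || (val j == (2 * k).-1)) ==> (h j == 1)]].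

Definition act {n k} (h : tup n k) (x : pt n k) : pt n k :=
  [ffun v : 'I_k * 'I_n * 'I_n =>
     x (v.1.1, h (oL v.1.1) v.1.2, h (oR v.1.1) v.2)].

(* Stab_Q(f) for f : Omega -> nat (values of f outside Omega are irrelevant) *)
Definition Stab {n} (G : {group {perm 'I_n}}) (k : nat) (f : pt n k -> nat) : {set tup n k} :=
  [set h in QQ G k | [forall x in Omega G k, f (act h x) == f x]].

Definition inN {n} (G : {group {perm 'I_n}}) {k : nat} (K : {set tup n k}) : Prop :=
  exists f : pt n k -> nat, K = Stab G k f.

Definition chi {n k} (i : 'I_k) (a b : 'I_n) (x : pt n k) : nat := x (i, a, b).

(* H|_{{p,q}} <= G^{{p,q}}, written as a set of pairs (h_p, h_q) *)
Definition restr2 {n k} (H : {set tup n k}) (p q : 'I_(2 * k))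
  : {set {perm 'I_n} * {perm 'I_n}} :=
  [set ((h : tup n k) p, (h : tup n k) q) | h in [set h : tup n k in H |
      [forall j : 'I_(2 * k), ((j != p) && (j != q)) ==> (h j == 1)]]].

Definition diag2 {n} (G : {group {perm 'I_n}}) : {set {perm 'I_n} * {perm 'I_n}} :=
  [set (g, g) | g in G].

(* {i, j} in E(H), for j = i+1 (0-indexed blocks): the paper's pair of
   coordinates {2i', 2i'+1} (1-indexed, i' = i+1) is (oR i, oL j). *)
Definition Eedge {n k} (G : {group {perm 'I_n}}) (H : {set tup n k}) (i j : 'I_k) : bool :=
  (val j == (val i).+1) && (restr2 H (oR i) (oL j) == diag2 G).

Definition adjHK {n k} (G : {group {perm 'I_n}}) (H K : {set tup n k}) : rel 'I_k :=
  fun i j => (Eedge G H i j && Eedge G K i j) || (Eedge G H j i && Eedge G K j i).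

Definition mu {n k} (G : {group {perm 'I_n}}) (H K : {set tup n k}) : nat :=
  if K == QQ G k then 0
  else \max_(v : 'I_k) #|[set w | connect (adjHK G H K) v w]|.

From mathcomp Require Import all_boot all_fingroup all_solvable.
From mathcomp Require Import zify.

(** The stabiliser H of a coordinate function M_{i,a,b} only constrains the
    two coordinates of block i.  Every pair {2j, 2j+1} of E(H) contains a
    coordinate outside block i and away from the two ends, so placing a
    nontrivial g in G there yields an element of H restricting to (g, 1) or
    (1, g), which is not diagonal.  Hence E(H) is empty and every connected
    component of ([k], E(H) ∩ E(K)) is a singleton. *)

Local Open Scope group_scope.

Section StabChi.

Variables (n k : nat) (G : {group {perm 'I_n}}).

Definition embed_at (c : 'I_(2 * k)) (g : {perm 'I_n}) : tup n k :=
  [ffun t => if t == c then g else 1].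

Lemma embed_at_id c g : embed_at c g c = g.
Proof. by rewrite ffunE eqxx. Qed.

Lemma embed_at_out c g t : t != c -> embed_at c g t = 1.
Proof. by rewrite ffunE => /negbTE ->. Qed.

Lemma embed_at_in_QQ (c : 'I_(2 * k)) g :
  g \in G -> 0 < c < (2 * k).-1 -> embed_at c g \in QQ G k.
Proof.
move=> gG c_int; rewrite inE; apply/andP; split.
  by apply/forallP => t; rewrite ffunE; case: ifP.
apply/forallP => t; apply/implyP => t_end.
rewrite embed_at_out //; apply: contraTneq t_end => ->.
case/andP: c_int => c_gt0 c_lt.
by rewrite negb_or -lt0n c_gt0 neq_ltn c_lt.
Qed.

Lemma embed_at_in_Stab_chi (i : 'I_k) a b (c : 'I_(2 * k)) g :
  g \in G -> 0 < c < (2 * k).-1 -> oL i != c -> oR i != c ->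
  embed_at c g \in Stab G k (chi i a b).
Proof.
move=> gG c_int cLi cRi; rewrite inE embed_at_in_QQ //=.
apply/forall_inP => x _.
by rewrite /chi /act ffunE /= !embed_at_out // !perm1.
Qed.

Lemma restr2_neq_diag2 (H : {set tup n k}) p q h :
  h \in H -> (forall t, t != p -> t != q -> h t = 1) -> h p != h q ->
  restr2 H p q != diag2 G.
Proof.
move=> hH h_supp hpq; apply/eqP => restrH.
have : (h p, h q) \in restr2 H p q.
  apply/imsetP; exists h => //; rewrite inE hH.
  by apply/forallP => t; apply/implyP => /andP[tp tq]; rewrite h_supp.
by rewrite restrH => /imsetP[g _ [hp hq]]; rewrite hp hq eqxx in hpq.
Qed.

Lemma edge_coord_off_block (i : 'I_k) {j j' : 'I_k} : val j' = (val j).+1 ->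
  exists c, [/\ c \in [:: oR j; oL j'], 0 < c < (2 * k).-1,
                oL i != c & oR i != c].
Proof.
move=> /= jj'; have := ltn_ord j'; case: (eqVneq j i) => [<-|ji] j'_lt.
  by exists (oL j'); rewrite !inE eqxx orbT -!val_eqE /=; split => //; lia.
move: ji; rewrite -val_eqE /= => ji.
by exists (oR j); rewrite !inE eqxx -!val_eqE /=; split => //; lia.
Qed.

Lemma Eedge_Stab_chi i a b j j' :
  G :!=: 1 -> ~~ Eedge G (Stab G k (chi i a b)) j j'.
Proof.
case/trivgPn => g gG g_nt; apply/andP => -[/eqP jj' /eqP restr_diag].
have [c [c_pair c_int cLi cRi]] := edge_coord_off_block i jj'.
have RL : oR j != oL j' by rewrite -val_eqE /=; move: jj' => /=; lia.
move: restr_diag; apply/eqP/(restr2_neq_diag2 _ _ _ (embed_at c g)).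
- exact: embed_at_in_Stab_chi.
- move=> t tR tL; apply: embed_at_out.
  by apply: contraNneq tR => tc; move: c_pair; rewrite -tc !inE (negbTE tL) orbF.
- by move: c_pair; rewrite !inE => /orP[] /eqP ->;
    rewrite embed_at_id embed_at_out // eq_sym.
Qed.

Lemma adjHK_Stab_chi i a b K v w :
  G :!=: 1 -> ~~ adjHK G (Stab G k (chi i a b)) K v w.
Proof. by move=> ntG; rewrite /adjHK !(negbTE (Eedge_Stab_chi _ _ _ _ _ ntG)). Qed.

Lemma mu_le1_edgeless (H K : {set tup n k}) :
  (forall v w, ~~ adjHK G H K v w) -> mu G H K <= 1.
Proof.
move=> no_adj; rewrite /mu; case: ifP => // _; apply/bigmax_leqP => v _.
rewrite -(cards1 v); apply/subset_leq_card/subsetP => w.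
rewrite inE => /connectP[[|x p] /= v_path ->]; first by rewrite inE.
by rewrite (negbTE (no_adj _ _)) in v_path.
Qed.

End StabChi.

Theorem lemma6p9 (n k : nat) (G : {group {perm 'I_n}}) :
  simple G -> ~~ abelian G ->
  (* G <= S_n is a faithful permutation representation of minimum degree *)
  (forall (m : nat) (f : {morphism G >-> {perm 'I_m}}), ('injm f)%g -> n <= m) ->
  0 < k ->
  forall (i : 'I_k) (a b : 'I_n) (H : {set tup n k}),
  H = Stab G k (chi i a b) ->
  forall K : {set tup n k},
  H \subset K -> K \subset QQ G k -> inN G K ->
  mu G H K <= 1.
Proof.
move=> _ nabG _ _ i a b H -> K _ _ _.
have ntG : G :!=: 1 by apply: contraNneq nabG => ->; exact: abelian1.
by apply: mu_le1_edgeless => v w; apply: adjHK_Stab_chi.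
Qed.
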